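(* Let $X$ be a real Hilbert space, $I=\{1,\dots,m\}$, and let $(T_i)_{i\in I}$ be averaged nonexpansive operators $X\to X$ with fixed point sets $Z_i=\operatorname{Fix}T_i$. Suppose each $T_i$ is boundedly regular, $Z=\bigcap_{i\in I}Z_i\neq\varnothing$, and the family $(Z_i)_{i\in I}$ is boundedly regular. Then for every $x_0\in X$ the sequence $((T_m\cdots T_1)^nx_0)_{n\in\mathbb N}$ converges strongly (in norm) to some point of $Z$.
   Context: $T$ is averaged nonexpansive if $T=(1-\lambda)\mathrm{Id}+\lambda N$ with $\lambda\in[0,1[$ and $N$ nonexpansive. An operator $T$ with $\operatorname{Fix}T\ne\varnothing$ is boundedly regular if for every bounded sequence $(x_n)$ with $x_n-Tx_n\to0$ we have $d_{\operatorname{Fix}T}(x_n)\to0$. A finite family $(C_i)_{i\in I}$ of closed convex sets with $C=\bigcap_iC_i\ne\varnothing$ is boundedly regular if for every bounded sequence $(x_n)$, $\max_{i}d_{C_i}(x_n)\to0$ implies $d_C(x_n)\to0$. *)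

From Stdlib Require Import Reals Lra List Arith ClassicalEpsilon.
Open Scope R_scope.

Record RealHilbert := {
  car :> Type;
  vzero : car;
  vadd : car -> car -> car;
  vopp : car -> car;
  vscal : R -> car -> car;
  inner : car -> car -> R;
  vadd_assoc : forall x y z, vadd x (vadd y z) = vadd (vadd x y) z;
  vadd_comm : forall x y, vadd x y = vadd y x;
  vadd_0 : forall x, vadd x vzero = x;
  vadd_opp : forall x, vadd x (vopp x) = vzero;
  vscal_1 : forall x, vscal 1 x = x;
  vscal_assoc : forall a b x, vscal a (vscal b x) = vscal (a * b) x;
  vscal_distr_v : forall a x y, vscal a (vadd x y) = vadd (vscal a x) (vscal a y);
  vscal_distr_s : forall a b x, vscal (a + b) x = vadd (vscal a x) (vscal b x);
  inner_sym : forall x y, inner x y = inner y x;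
  inner_add_l : forall x y z, inner (vadd x y) z = inner x z + inner y z;
  inner_scal_l : forall a x y, inner (vscal a x) y = a * inner x y;
  inner_pos : forall x, 0 <= inner x x;
  inner_def : forall x, inner x x = 0 -> x = vzero;
  complete : forall u : nat -> car,
    (forall eps, 0 < eps -> exists N, forall p q, (N <= p)%nat -> (N <= q)%nat ->
        sqrt (inner (vadd (u p) (vopp (u q))) (vadd (u p) (vopp (u q)))) < eps) ->
    exists l, Un_cv (fun n => sqrt (inner (vadd (u n) (vopp l)) (vadd (u n) (vopp l)))) 0
}.

Section Ops.
Variable X : RealHilbert.

Definition vsub (x y : X) : X := vadd X x (vopp X y).
Definition norm (x : X) : R := sqrt (inner X x x).

Definition nonexpansive (N : X -> X) : Prop :=
  forall x y, norm (vsub (N x) (N y)) <= norm (vsub x y).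

Definition averaged (T : X -> X) : Prop :=
  exists (lam : R) (N : X -> X), 0 <= lam < 1 /\ nonexpansive N /\
    forall x, T x = vadd X (vscal X (1 - lam) x) (vscal X lam (N x)).

Definition Fix (T : X -> X) : X -> Prop := fun x => T x = x.

Definition is_dist_set (C : X -> Prop) (x : X) (d : R) : Prop :=
  (forall c, C c -> d <= norm (vsub x c)) /\
  (forall e, (forall c, C c -> e <= norm (vsub x c)) -> e <= d).

(** The distance function d_C (its value is unspecified when C is empty). *)
Definition dist_set (C : X -> Prop) (x : X) : R :=
  epsilon (inhabits 0) (is_dist_set C x).

Definition bounded_seq (u : nat -> X) : Prop :=
  exists M, forall n, norm (u n) <= M.

Definition boundedly_regular_op (T : X -> X) : Prop :=
  (exists z, Fix T z) /\
  forall u : nat -> X, bounded_seq u ->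
    Un_cv (fun n => norm (vsub (u n) (T (u n)))) 0 ->
    Un_cv (fun n => dist_set (Fix T) (u n)) 0.

Definition inter_family (m : nat) (C : nat -> X -> Prop) : X -> Prop :=
  fun x => forall i, (i < m)%nat -> C i x.

(** max_{i < m} d_{C_i}(x)  (distances are >= 0, so starting the fold at 0 is harmless). *)
Definition max_dist (m : nat) (C : nat -> X -> Prop) (x : X) : R :=
  fold_right Rmax 0 (map (fun i => dist_set (C i) x) (seq 0 m)).

Definition boundedly_regular_family (m : nat) (C : nat -> X -> Prop) : Prop :=
  (exists z, inter_family m C z) /\
  forall u : nat -> X, bounded_seq u ->
    Un_cv (fun n => max_dist m C (u n)) 0 ->
    Un_cv (fun n => dist_set (inter_family m C) (u n)) 0.

(** Product T_{m-1} ∘ ... ∘ T_0 (indices shifted: T_i for i < m). *)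
Fixpoint comp_ops (T : nat -> X -> X) (k : nat) (x : X) : X :=
  match k with
  | O => x
  | S k' => T k' (comp_ops T k' x)
  end.

End Ops.

From Stdlib Require Import Reals Lra Lia List ClassicalEpsilon Classical.
Open Scope R_scope.

(* Every T_i is averaged, hence strongly quasi-nonexpansive:
   ||T x - z||^2 + c ||x - T x||^2 <= ||x - z||^2 for z in Fix T.  So the
   cyclic iterates x_n are Fejer monotone with respect to Z, and telescoping
   ||x_n - z||^2 - ||x_(n+1) - z||^2 over the m sub-steps of one sweep shows
   that every sub-step ||y - T_i y|| tends to 0; in particular all partial
   iterates stay close to x_n.  Bounded regularity of each T_i then gives
   d(x_n, Z_i) -> 0, bounded regularity of the family gives d(x_n, Z) -> 0,
   and a Fejer monotone sequence whose distance to Z vanishes is Cauchy.  Its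
   limit lies in the closure of Z, which every T_i fixes. *)

Lemma cv0_squeeze (u v : nat -> R) :
  (forall n, 0 <= u n <= v n) -> Un_cv v 0 -> Un_cv u 0.
Proof.
  intros H Hv eps He. destruct (Hv eps He) as [N HN]. exists N. intros n Hn.
  specialize (HN n Hn). specialize (H n). unfold R_dist in *.
  rewrite Rabs_right in * by lra. lra.
Qed.

Lemma cv0_plus (u v : nat -> R) :
  Un_cv u 0 -> Un_cv v 0 -> Un_cv (fun n => u n + v n) 0.
Proof. intros. replace 0 with (0 + 0) by ring. apply CV_plus; auto. Qed.

Lemma cv0_const : Un_cv (fun _ => 0) 0.
Proof. intros eps He. exists 0%nat. intros. unfold R_dist. rewrite Rminus_0_r, Rabs_R0. auto. Qed.

Lemma cv0_scaled_le (u v : nat -> R) (c : R) : 0 < c -> (forall n, 0 <= u n) ->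
  (forall n, c * u n <= v n) -> Un_cv v 0 -> Un_cv u 0.
Proof.
  intros Hc H0 H Hv eps He. destruct (Hv (c * eps)) as [N HN]; [nra|].
  exists N. intros n Hn. specialize (HN n Hn). specialize (H n). specialize (H0 n).
  unfold R_dist in *. rewrite Rminus_0_r in *.
  rewrite Rabs_right in HN by nra. rewrite Rabs_right by lra. nra.
Qed.

Lemma cv0_sqrt (u : nat -> R) :
  (forall n, 0 <= u n) -> Un_cv u 0 -> Un_cv (fun n => sqrt (u n)) 0.
Proof.
  intros H0 Hu eps He. destruct (Hu (eps * eps)) as [N HN]; [nra|].
  exists N. intros n Hn. specialize (HN n Hn). specialize (H0 n).
  unfold R_dist in *. rewrite Rminus_0_r in *. rewrite Rabs_right in HN by lra.
  pose proof (sqrt_pos (u n)). rewrite Rabs_right by lra.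
  rewrite <- (sqrt_square eps) by lra. apply sqrt_lt_1_alt. lra.
Qed.

Lemma fold_Rmax_nonneg (l : list R) : 0 <= fold_right Rmax 0 l.
Proof.
  induction l as [|a l IH]; simpl; [lra|].
  pose proof (Rmax_r a (fold_right Rmax 0 l)). lra.
Qed.

Lemma cv0_fold_Rmax (f : nat -> nat -> R) (l : list nat) :
  (forall i, In i l -> forall n, 0 <= f i n) ->
  (forall i, In i l -> Un_cv (fun n => f i n) 0) ->
  Un_cv (fun n => fold_right Rmax 0 (map (fun i => f i n) l)) 0.
Proof.
  induction l as [|a l IH]; intros Hpos Hcv; simpl; [apply cv0_const|].
  apply cv0_squeeze with
    (v := fun n => f a n + fold_right Rmax 0 (map (fun i => f i n) l)).
  - intro n. pose proof (fold_Rmax_nonneg (map (fun i => f i n) l)).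
    pose proof (Hpos a (or_introl eq_refl) n).
    pose proof (Rmax_r (f a n) (fold_right Rmax 0 (map (fun i => f i n) l))).
    split; [lra|]. apply Rmax_lub; lra.
  - apply cv0_plus; [apply Hcv; simpl; auto|].
    apply IH; intros; [apply Hpos | apply Hcv]; simpl; auto.
Qed.

Lemma decreasing_nonneg_diff_cv0 (a : nat -> R) :
  Un_decreasing a -> (forall n, 0 <= a n) -> Un_cv (fun n => a n - a (S n)) 0.
Proof.
  intros Hdec Hpos. destruct (decreasing_cv a Hdec) as [l Hl].
  { exists 0. intros r [n ->]. unfold opp_seq. specialize (Hpos n). lra. }
  intros eps He. destruct (Hl (eps / 2)) as [N HN]; [lra|]. exists N. intros n Hn.
  pose proof (HN n Hn) as A1. pose proof (HN (S n) ltac:(lia)) as A2.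
  unfold R_dist in *. rewrite Rminus_0_r.
  apply Rabs_def2 in A1. apply Rabs_def2 in A2. apply Rabs_def1; lra.
Qed.

Section Hilbert.

Variable X : RealHilbert.

Local Notation vdist x y := (norm X (vsub X x y)).

Definition sqnorm (x : X) : R := inner X x x.

Lemma inner_add_r (x y z : X) : inner X x (vadd X y z) = inner X x y + inner X x z.
Proof. rewrite (inner_sym X x), inner_add_l, (inner_sym X y), (inner_sym X z). reflexivity. Qed.

Lemma inner_scal_r a (x y : X) : inner X x (vscal X a y) = a * inner X x y.
Proof. rewrite (inner_sym X x), inner_scal_l, (inner_sym X y). reflexivity. Qed.

Lemma inner_zero_l (y : X) : inner X (vzero X) y = 0.
Proof. pose proof (inner_add_l X (vzero X) (vzero X) y) as H. rewrite vadd_0 in H. lra. Qed.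

Lemma inner_zero_r (y : X) : inner X y (vzero X) = 0.
Proof. rewrite inner_sym. apply inner_zero_l. Qed.

Lemma inner_opp_l (x y : X) : inner X (vopp X x) y = - inner X x y.
Proof.
  pose proof (inner_add_l X x (vopp X x) y) as H.
  rewrite vadd_opp, inner_zero_l in H. lra.
Qed.

Lemma inner_opp_r (x y : X) : inner X y (vopp X x) = - inner X y x.
Proof. rewrite (inner_sym X y), inner_opp_l, (inner_sym X x). reflexivity. Qed.

Hint Rewrite inner_add_l inner_add_r inner_scal_l inner_scal_r inner_opp_l
  inner_opp_r inner_zero_l inner_zero_r : inner.

Ltac inner_expand := unfold sqnorm, vsub in *; autorewrite with inner in *.

Lemma sqnorm_nonneg (x : X) : 0 <= sqnorm x.
Proof. apply inner_pos. Qed.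

Lemma norm_nonneg (x : X) : 0 <= norm X x.
Proof. apply sqrt_pos. Qed.

Lemma norm_le_sqnorm (x y : X) : sqnorm x <= sqnorm y -> norm X x <= norm X y.
Proof. apply sqrt_le_1_alt. Qed.

Lemma sqnorm_le_norm (x y : X) : norm X x <= norm X y -> sqnorm x <= sqnorm y.
Proof. apply sqrt_le_0; apply inner_pos. Qed.

Lemma vsub_eq0 (x y : X) : vsub X x y = vzero X -> x = y.
Proof.
  unfold vsub; intro H. rewrite <- (vadd_0 X x).
  assert (E : vadd X (vopp X y) y = vzero X) by (rewrite vadd_comm; apply vadd_opp).
  rewrite <- E, vadd_assoc, H, vadd_comm, vadd_0. reflexivity.
Qed.

Lemma vdist_eq0 (x y : X) : vdist x y = 0 -> x = y.
Proof. intro H. apply vsub_eq0, inner_def, sqrt_eq_0; [apply inner_pos | exact H]. Qed.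

Lemma vdist_sym (x y : X) : vdist x y = vdist y x.
Proof. unfold norm; f_equal. inner_expand. rewrite (inner_sym X y x). ring. Qed.

Lemma vdist_diag (x : X) : vdist x x = 0.
Proof.
  unfold norm. replace (inner X (vsub X x x) (vsub X x x)) with 0; [apply sqrt_0|].
  inner_expand. ring.
Qed.

Lemma vdist_zero_r (x : X) : vdist x (vzero X) = norm X x.
Proof. unfold norm; f_equal. inner_expand. ring. Qed.

Lemma cauchy_schwarz (x y : X) :
  inner X x y * inner X x y <= inner X x x * inner X y y.
Proof.
  destruct (Req_dec (inner X y y) 0) as [H|H].
  - apply inner_def in H. subst. autorewrite with inner. nra.
  - pose proof (inner_pos X y).
    pose proof (inner_pos X (vadd X (vscal X (inner X y y) x) (vscal X (- inner X x y) y))) as P.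
    autorewrite with inner in P. rewrite (inner_sym X y x) in P.
    assert (0 <= inner X y y * (inner X x x * inner X y y - inner X x y * inner X x y)) by nra.
    nra.
Qed.

Lemma inner_le_norm (x y : X) : inner X x y <= norm X x * norm X y.
Proof.
  unfold norm. rewrite <- sqrt_mult_alt by apply inner_pos.
  destruct (Rle_dec (inner X x y) 0).
  - pose proof (sqrt_pos (inner X x x * inner X y y)). lra.
  - rewrite <- (sqrt_square (inner X x y)) by lra.
    apply sqrt_le_1_alt, cauchy_schwarz.
Qed.

Lemma vdist_triangle (x y z : X) : vdist x z <= vdist x y + vdist y z.
Proof.
  set (u := vsub X x y). set (w := vsub X y z).
  assert (E : sqnorm (vsub X x z) = sqnorm u + 2 * inner X u w + sqnorm w).
  { unfold u, w; inner_expand.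
    rewrite (inner_sym X y x), (inner_sym X z x), (inner_sym X z y). ring. }
  pose proof (inner_le_norm u w). pose proof (norm_nonneg u). pose proof (norm_nonneg w).
  assert (sqnorm u = norm X u * norm X u) by (unfold norm; rewrite sqrt_sqrt; auto; apply inner_pos).
  assert (sqnorm w = norm X w * norm X w) by (unfold norm; rewrite sqrt_sqrt; auto; apply inner_pos).
  rewrite <- (sqrt_square (norm X u + norm X w)) by lra.
  apply sqrt_le_1_alt. fold (sqnorm (vsub X x z)). nra.
Qed.

Definition strongly_quasinonexpansive (T : X -> X) : Prop :=
  exists c, 0 < c /\ forall x z, Fix X T z ->
    sqnorm (vsub X (T x) z) + c * sqnorm (vsub X x (T x)) <= sqnorm (vsub X x z).

Definition quasinonexpansive_on (C : X -> Prop) (T : X -> X) : Prop :=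
  forall x c, C c -> vdist (T x) c <= vdist x c.

Lemma averaged_component_fix (lam : R) (N T : X -> X) (z : X) :
  lam <> 0 -> (forall x, T x = vadd X (vscal X (1 - lam) x) (vscal X lam (N x))) ->
  Fix X T z -> N z = z.
Proof.
  intros Hlam HT Hz.
  assert (E : sqnorm (vsub X z (T z)) = lam ^ 2 * sqnorm (vsub X z (N z))).
  { rewrite HT. inner_expand. rewrite (inner_sym X (N z) z). ring. }
  unfold Fix in Hz. rewrite Hz in E.
  replace (sqnorm (vsub X z z)) with 0 in E by (inner_expand; ring).
  symmetry. apply vsub_eq0, inner_def.
  symmetry in E. apply Rmult_integral in E as [E|E]; [|exact E].
  exfalso. exact (pow_nonzero lam 2 Hlam E).
Qed.

Lemma averaged_strongly_quasinonexpansive (T : X -> X) :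
  averaged X T -> strongly_quasinonexpansive T.
Proof.
  intros [lam [N [Hl [HN HT]]]]. exists (1 - lam). split; [lra|]. intros x z Hz.
  assert (HNz : lam * sqnorm (vsub X (N x) z) <= lam * sqnorm (vsub X x z)).
  { destruct (Req_dec lam 0) as [->|E]; [lra|].
    apply Rmult_le_compat_l; [lra|]. apply sqnorm_le_norm.
    rewrite <- (averaged_component_fix lam N T z E HT Hz) at 1. apply HN. }
  assert (E : sqnorm (vsub X (T x) z) + (1 - lam) * sqnorm (vsub X x (T x)) =
     (1 - lam) * sqnorm (vsub X x z) + lam * sqnorm (vsub X (N x) z)
       - lam * (1 - lam) * (1 - lam) * sqnorm (vsub X x (N x))).
  { rewrite !HT. inner_expand.
    rewrite (inner_sym X (N x) x), (inner_sym X z x), (inner_sym X z (N x)). ring. }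
  pose proof (sqnorm_nonneg (vsub X x (N x))).
  assert (0 <= lam * (1 - lam) * (1 - lam) * sqnorm (vsub X x (N x)))
    by (repeat apply Rmult_le_pos; lra).
  lra.
Qed.

Lemma strongly_quasinonexpansive_quasinonexpansive (T : X -> X) :
  strongly_quasinonexpansive T -> quasinonexpansive_on (Fix X T) T.
Proof.
  intros [c [Hc H]] x z Hz. apply norm_le_sqnorm.
  specialize (H x z Hz). pose proof (sqnorm_nonneg (vsub X x (T x))). nra.
Qed.

Lemma quasinonexpansive_fix_of_approx (C : X -> Prop) (T : X -> X) (l : X) :
  quasinonexpansive_on C T ->
  (forall eps, 0 < eps -> exists c, C c /\ vdist l c < eps) -> Fix X T l.
Proof.
  intros HT Happ. apply vdist_eq0.
  apply Rle_antisym; [|apply norm_nonneg]. apply Rnot_lt_le. intro Hpos.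
  destruct (Happ (vdist (T l) l / 2)) as [c [Hc Hlc]]; [lra|].
  pose proof (HT l c Hc).
  pose proof (vdist_triangle (T l) c l). rewrite (vdist_sym c l) in *. lra.
Qed.

Lemma dist_set_spec (C : X -> Prop) (x : X) :
  (exists c, C c) -> is_dist_set X C x (dist_set X C x).
Proof.
  intros [c0 Hc0]. unfold dist_set. apply epsilon_spec.
  set (E := fun r => exists c, C c /\ r = - vdist x c).
  destruct (completeness E) as [s [Hub Hlub]].
  - exists 0. intros r [c [_ ->]]. pose proof (norm_nonneg (vsub X x c)). lra.
  - exists (- vdist x c0). exists c0. auto.
  - exists (- s). split.
    + intros c Hc. assert (E (- vdist x c)) by (exists c; auto).
      pose proof (Hub _ H). lra.
    + intros e He. enough (s <= - e) by lra.
      apply Hlub. intros r [c [Hc ->]]. pose proof (He c Hc). lra.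
Qed.

Lemma dist_set_nonneg (C : X -> Prop) (x : X) :
  (exists c, C c) -> 0 <= dist_set X C x.
Proof. intro H. apply (dist_set_spec C x H). intros c _. apply norm_nonneg. Qed.

Lemma dist_set_le_vdist (C : X -> Prop) (x y : X) :
  (exists c, C c) -> dist_set X C x <= vdist x y + dist_set X C y.
Proof.
  intros H. destruct (dist_set_spec C x H) as [Hx _].
  destruct (dist_set_spec C y H) as [_ Hy].
  enough (dist_set X C x - vdist x y <= dist_set X C y) by lra.
  apply Hy. intros c Hc. pose proof (Hx c Hc). pose proof (vdist_triangle x y c). lra.
Qed.

Lemma dist_set_lt (C : X -> Prop) (x : X) (e : R) :
  (exists c, C c) -> dist_set X C x < e -> exists c, C c /\ vdist x c < e.
Proof.
  intros H He. apply NNPP. intro Hn.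
  enough (e <= dist_set X C x) by lra.
  apply (dist_set_spec C x H). intros c Hc. apply Rnot_lt_le. intro Hlt.
  apply Hn. exists c. auto.
Qed.

Lemma dist_set_cv0_approx (C : X -> Prop) (u : nat -> X) (n : nat) (e : R) :
  (exists c, C c) -> Un_cv (fun n => dist_set X C (u n)) 0 -> 0 < e ->
  exists N, (n <= N)%nat /\ exists c, C c /\ vdist (u N) c < e.
Proof.
  intros HC Hd He. destruct (Hd e He) as [N HN]. exists (Nat.max n N). split; [lia|].
  apply dist_set_lt; auto. specialize (HN (Nat.max n N) ltac:(lia)).
  unfold R_dist in HN. rewrite Rminus_0_r in HN.
  pose proof (Rle_abs (dist_set X C (u (Nat.max n N)))). lra.
Qed.

Lemma bounded_seq_of_vdist (u : nat -> X) (z : X) (M : R) :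
  (forall n, vdist (u n) z <= M) -> bounded_seq X u.
Proof.
  intros H. exists (M + norm X z). intros n.
  pose proof (vdist_triangle (u n) z (vzero X)). rewrite !vdist_zero_r in *.
  specialize (H n). lra.
Qed.

Definition fejer_monotone (C : X -> Prop) (u : nat -> X) : Prop :=
  forall c, C c -> forall n, vdist (u (S n)) c <= vdist (u n) c.

Lemma fejer_monotone_le (C : X -> Prop) (u : nat -> X) (c : X) (n p : nat) :
  fejer_monotone C u -> C c -> (n <= p)%nat -> vdist (u p) c <= vdist (u n) c.
Proof.
  intros Hu Hc Hnp. induction Hnp; [lra|].
  eapply Rle_trans; [apply Hu, Hc | exact IHHnp].
Qed.

Lemma fejer_monotone_cauchy (C : X -> Prop) (u : nat -> X) :
  (exists c, C c) -> fejer_monotone C u -> Un_cv (fun n => dist_set X C (u n)) 0 ->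
  forall eps, 0 < eps -> exists N, forall p q, (N <= p)%nat -> (N <= q)%nat ->
    vdist (u p) (u q) < eps.
Proof.
  intros HC Hu Hd eps He.
  destruct (dist_set_cv0_approx C u 0 (eps / 2) HC Hd) as [N [_ [c [Hc HNc]]]]; [lra|].
  exists N. intros p q Hp Hq.
  pose proof (fejer_monotone_le C u c N p Hu Hc Hp).
  pose proof (fejer_monotone_le C u c N q Hu Hc Hq).
  pose proof (vdist_triangle (u p) c (u q)). rewrite (vdist_sym c (u q)) in *. lra.
Qed.

Lemma fejer_monotone_cv (C : X -> Prop) (u : nat -> X) :
  (exists c, C c) -> fejer_monotone C u -> Un_cv (fun n => dist_set X C (u n)) 0 ->
  exists l, Un_cv (fun n => vdist (u n) l) 0 /\
    forall eps, 0 < eps -> exists c, C c /\ vdist l c < eps.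
Proof.
  intros HC Hu Hd.
  destruct (complete X u (fejer_monotone_cauchy C u HC Hu Hd)) as [l Hl].
  change (Un_cv (fun n => vdist (u n) l) 0) in Hl.
  exists l. split; [exact Hl|]. intros eps He.
  destruct (Hl (eps / 2)) as [N1 HN1]; [lra|].
  destruct (dist_set_cv0_approx C u N1 (eps / 2) HC Hd) as [N [HN [c [Hc HNc]]]]; [lra|].
  exists c. split; [exact Hc|].
  specialize (HN1 N HN). unfold R_dist in HN1. rewrite Rminus_0_r in HN1.
  pose proof (Rle_abs (vdist (u N) l)).
  pose proof (vdist_triangle l (u N) c). rewrite (vdist_sym l (u N)) in *. lra.
Qed.

Section Cyclic.

Variable m : nat.
Variable T : nat -> X -> X.
Hypothesis Havg : forall i, (i < m)%nat -> averaged X (T i).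

Local Notation Z := (inter_family X m (fun i => Fix X (T i))).
Local Notation sweep := (comp_ops X T m).

Lemma comp_ops_vdist_antitone (z x : X) (j k : nat) :
  Z z -> (j <= k <= m)%nat -> vdist (comp_ops X T k x) z <= vdist (comp_ops X T j x) z.
Proof.
  intros Hz. revert j. induction k as [|k IH]; intros j Hj.
  - replace j with 0%nat by lia. lra.
  - destruct (Nat.eq_dec j (S k)) as [->|Hne]; [lra|]. simpl.
    eapply Rle_trans; [|apply IH; lia].
    apply strongly_quasinonexpansive_quasinonexpansive;
      [apply averaged_strongly_quasinonexpansive, Havg; lia | apply Hz; lia].
Qed.

Lemma cyclic_iterates_fejer (x0 : X) : fejer_monotone Z (fun n => Nat.iter n sweep x0).
Proof.
  intros z Hz n. exact (comp_ops_vdist_antitone z _ 0 m Hz ltac:(lia)).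
Qed.

Variables (x0 z0 : X).
Hypothesis Hz0 : Z z0.

Local Notation x n := (Nat.iter n sweep x0).
Local Notation y n i := (comp_ops X T i (x n)).

Lemma cyclic_steps_vanish (i : nat) :
  (i < m)%nat -> Un_cv (fun n => vdist (y n i) (T i (y n i))) 0.
Proof.
  intros Hi. destruct (averaged_strongly_quasinonexpansive _ (Havg i Hi)) as [c [Hc Hsq]].
  set (a n := sqnorm (vsub X (x n) z0)).
  apply (cv0_sqrt (fun n => sqnorm (vsub X (y n i) (T i (y n i))))); [intros; apply sqnorm_nonneg|].
  apply (cv0_scaled_le _ (fun n => a n - a (S n)) c Hc); [intros; apply sqnorm_nonneg| |].
  - (* one sweep loses at least c ||y - T_i y||^2 of squared distance to z0 *)
    intros n. unfold a. change (x (S n)) with (y n m).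
    pose proof (Hsq (y n i) z0 (Hz0 i Hi)).
    pose proof (sqnorm_le_norm _ _ (comp_ops_vdist_antitone z0 (x n) (S i) m Hz0 ltac:(lia))).
    pose proof (sqnorm_le_norm _ _ (comp_ops_vdist_antitone z0 (x n) 0 i Hz0 ltac:(lia))).
    cbn [comp_ops] in *. lra.
  - apply decreasing_nonneg_diff_cv0; [|intros; apply sqnorm_nonneg].
    intro n. apply sqnorm_le_norm, (cyclic_iterates_fejer x0 z0 Hz0).
Qed.

Lemma cyclic_partial_iterates_close (i : nat) :
  (i <= m)%nat -> Un_cv (fun n => vdist (x n) (y n i)) 0.
Proof.
  induction i as [|i IH]; intros Hi.
  - apply (cv0_squeeze _ _ (fun n => conj (norm_nonneg _) (Req_le _ _ (vdist_diag _)))).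
    apply cv0_const.
  - apply cv0_squeeze with (v := fun n => vdist (x n) (y n i) + vdist (y n i) (T i (y n i))).
    + intro n. split; [apply norm_nonneg | apply vdist_triangle].
    + apply cv0_plus; [apply IH; lia | apply cyclic_steps_vanish; lia].
Qed.

Lemma cyclic_partial_iterates_bounded (i : nat) :
  (i <= m)%nat -> bounded_seq X (fun n => y n i).
Proof.
  intros Hi. apply (bounded_seq_of_vdist _ z0 (vdist x0 z0)). intros n.
  eapply Rle_trans; [apply (comp_ops_vdist_antitone z0 _ 0 i Hz0); lia|].
  apply (fejer_monotone_le Z _ z0 0 n (cyclic_iterates_fejer x0) Hz0). lia.
Qed.

Hypothesis Hreg : forall i, (i < m)%nat -> boundedly_regular_op X (T i).

Lemma cyclic_dist_fix_vanish (i : nat) :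
  (i < m)%nat -> Un_cv (fun n => dist_set X (Fix X (T i)) (x n)) 0.
Proof.
  intros Hi. assert (HC : exists c, Fix X (T i) c) by (exists z0; apply Hz0, Hi).
  apply cv0_squeeze with
    (v := fun n => vdist (x n) (y n i) + dist_set X (Fix X (T i)) (y n i)).
  - intro n. split; [apply dist_set_nonneg | apply dist_set_le_vdist]; exact HC.
  - apply cv0_plus; [apply cyclic_partial_iterates_close; lia|].
    apply (proj2 (Hreg i Hi)).
    + apply cyclic_partial_iterates_bounded. lia.
    + apply cyclic_steps_vanish, Hi.
Qed.

Hypothesis Hfam : boundedly_regular_family X m (fun i => Fix X (T i)).

Lemma cyclic_dist_inter_vanish : Un_cv (fun n => dist_set X Z (x n)) 0.
Proof.
  apply (proj2 Hfam); [exact (cyclic_partial_iterates_bounded 0 ltac:(lia))|].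
  apply (cv0_fold_Rmax (fun i n => dist_set X (Fix X (T i)) (x n)));
    intros i Hin; apply in_seq in Hin.
  - intro n. apply dist_set_nonneg. exists z0. apply Hz0. lia.
  - apply cyclic_dist_fix_vanish. lia.
Qed.

End Cyclic.

End Hilbert.

Theorem theorem7p1 (X : RealHilbert) (m : nat) (T : nat -> X -> X)
  (Havg : forall i, (i < m)%nat -> averaged X (T i))
  (Hreg : forall i, (i < m)%nat -> boundedly_regular_op X (T i))
  (HZ : exists z, inter_family X m (fun i => Fix X (T i)) z)
  (Hfam : boundedly_regular_family X m (fun i => Fix X (T i))) :
  forall x0 : X, exists z, inter_family X m (fun i => Fix X (T i)) z /\
    Un_cv (fun n => norm X (vsub X (Nat.iter n (comp_ops X T m) x0) z)) 0.
Proof.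
  intros x0. destruct HZ as [z0 Hz0].
  destruct (fejer_monotone_cv X _ _ (ex_intro _ z0 Hz0)
              (cyclic_iterates_fejer X m T Havg x0)
              (cyclic_dist_inter_vanish X m T Havg x0 z0 Hz0 Hreg Hfam))
    as [l [Hl Happrox]].
  exists l. split; [|exact Hl]. intros i Hi.
  apply (quasinonexpansive_fix_of_approx X (inter_family X m (fun i => Fix X (T i))));
    [|exact Happrox].
  intros x c Hc.
  apply strongly_quasinonexpansive_quasinonexpansive;
    [apply averaged_strongly_quasinonexpansive, Havg, Hi | apply Hc, Hi].
Qed.
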